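(* Let $(z,x)$ be a feasible solution of the cluster LP for vertex set $V$. Run the following cluster-based rounding: set $\mathcal C\gets\emptyset$, $V'\gets V$; while $V'\neq\emptyset$, choose a set $S$ at random with probability $z_S/\sum_{S'}z_{S'}$ (independently in each iteration), and if $V'\cap S\neq\emptyset$, add $V'\cap S$ to $\mathcal C$ and set $V'\gets V'\setminus S$; output $\mathcal C$. Then for every $uv\in\binom V2$, the probability that $u$ and $v$ are in different clusters of the output $\mathcal C$ is $\frac{2x_{uv}}{1+x_{uv}}$, and the probability that they are in the same cluster is $\frac{1-x_{uv}}{1+x_{uv}}$.
   Context: The cluster LP for a finite vertex set $V$ has a variable $z_S$ for every nonempty $S\subseteq V$ and $x_{uv}$ for every unordered pair $uv$ of distinct vertices, with constraints $\sum_{S\ni u}z_S=1$ for all $u\in V$, $\sum_{S\supseteq\{u,v\}}z_S=1-x_{uv}$ for all $uv$, and $z_S\ge0$. *)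

From HB Require Import structures.
From mathcomp Require Import all_boot all_order all_algebra.
From mathcomp Require Import all_classical all_reals topology normedtype sequences.
Set Implicit Arguments. Unset Strict Implicit. Unset Printing Implicit Defensive.
Import Order.TTheory GRing.Theory Num.Theory.
Local Open Scope ring_scope.

Section ClusterLP.
Variables (R : realType) (T : finType).

(* Cluster LP on vertex set V = (finset.setTfor T): variables z_S for nonempty S
   (the value z finset.set0 is ignored) and x_uv for distinct u v. *)
Definition cluster_lp_feasible (z : {set T} -> R) (x : T -> T -> R) : Prop :=
  [/\ forall u : T, \sum_(S : {set T} | u \in S) z S = 1,
      forall u v : T, u != v ->
        \sum_(S : {set T} | (u \in S) && (v \in S)) z S = 1 - x u v
    & forall S : {set T}, S != finset.set0 -> 0 <= z S].

Definition zw (z : {set T} -> R) (S : {set T}) : R := if S == finset.set0 then 0 else z S.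

Definition pick_prob (z : {set T} -> R) (S : {set T}) : R :=
  zw z S / \sum_(S' : {set T}) zw z S'.

(* state of the rounding: (V', current clustering C) *)
Definition rstate := ({set T} * {set {set T}})%type.

Definition rinit : rstate := ((finset.setTfor T), finset.set0).

(* one iteration of the loop with the sampled set S
   (when V' is empty nothing changes, i.e. the process has stopped) *)
Definition rstep (s : rstate) (S : {set T}) : rstate :=
  if s.1 :&: S != finset.set0 then (s.1 :\: S, (s.1 :&: S) |: s.2) else s.

Fixpoint rdist (z : {set T} -> R) (k : nat) : rstate -> R :=
  match k with
  | 0 => fun s => (s == rinit)%:R
  | k'.+1 => fun s' =>
      \sum_(s : rstate) rdist z k' s *
        \sum_(S : {set T} | rstep s S == s') pick_prob z S
  end.

Definition sep_event (u v : T) (s : rstate) : bool :=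
  (s.1 == finset.set0) &&
  [exists A in s.2, exists B in s.2, [&& A != B, u \in A & v \in B]].

Definition same_event (u v : T) (s : rstate) : bool :=
  (s.1 == finset.set0) && [exists A in s.2, (u \in A) && (v \in A)].

Definition prob_by (z : {set T} -> R) (E : pred rstate) (k : nat) : R :=
  \sum_(s : rstate | E s) rdist z k s.

End ClusterLP.

(* Each iteration draws S with probability z_S / W, where W = sum_S z_S >= 1.
   By the LP constraints and inclusion-exclusion, the drawn set meets {u, v}
   with probability (1 + x_uv) / W and contains both u and v with probability
   (1 - x_uv) / W.  Since the clusters always partition V \ V', u and v end up
   together exactly when the first iteration touching {u, v} takes both, so
   after k iterations they share a cluster with probability
   (1 - x_uv) / (1 + x_uv) * (1 - (1 - (1 + x_uv) / W)^k).  Each vertex stays in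
   V' with probability (1 - 1/W)^k, so the process terminates almost surely and
   the separation probability tends to 1 - (1 - x_uv) / (1 + x_uv). *)

From HB Require Import structures.
From mathcomp Require Import all_boot all_order all_algebra.
From mathcomp Require Import all_classical all_reals topology normedtype sequences.
From mathcomp Require Import ring lra.
Set Implicit Arguments.
Unset Strict Implicit.
Unset Printing Implicit Defensive.
Import Order.TTheory GRing.Theory Num.Theory.
Import numFieldNormedType.Exports.
Local Open Scope ring_scope.

Lemma sum_mul_indicator (R : pzSemiRingType) (I : finType) (F : I -> R) (P : pred I) :
  \sum_i F i * (P i)%:R = \sum_(i | P i) F i.
Proof.
by rewrite [RHS]big_mkcond; apply: eq_bigr => i _; case: (P i); rewrite ?mulr1 ?mulr0.
Qed.

Section RoundingStates.
Variable T : finType.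
Implicit Types (s : rstate T) (A S : {set T}).

Definition rounding_inv s : bool := finset.partition s.2 (~: s.1).

Definition running s : bool := s.1 != finset.set0.

Lemma rounding_inv_init : rounding_inv (rinit T).
Proof.
by rewrite /rounding_inv /rinit /= finset.setCT partition_set0.
Qed.

Lemma rounding_inv_step s S : rounding_inv s -> rounding_inv (rstep s S).
Proof.
rewrite /rstep; case: ifP => // hit inv; rewrite /rounding_inv /=.
have -> : ~: (s.1 :\: S) = (s.1 :&: S) :|: ~: s.1.
  by apply/setP => w; rewrite !inE; case: (w \in s.1); case: (w \in S).
apply: partitionU1 => //; rewrite -setI_eq0; apply/eqP/setP => w.
by rewrite !inE; case: (w \in s.1); rewrite ?andbF.
Qed.

Lemma subset_rstep A s S :
  (A \subset (rstep s S).1) = (A \subset s.1) && [disjoint A & S].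
Proof.
rewrite /rstep; case: ifP => [_|/negbFE/eqP noHit] /=; first exact: subsetD.
case sub: (A \subset s.1) => //=.
by rewrite (disjointWl sub) // -setI_eq0 noHit.
Qed.

Variables u v : T.

Definition both_remaining s : bool := [set u; v] \subset s.1.
Definition same_cluster s : bool := [exists A in s.2, (u \in A) && (v \in A)].

Lemma same_cluster_step s S :
  same_cluster (rstep s S) = same_cluster s || both_remaining s && ([set u; v] \subset S).
Proof.
rewrite /both_remaining !finset.subUset !finset.sub1set.
rewrite /rstep; case: ifP => [hit|/negbFE/eqP noHit] /=.
  apply/existsP/orP => [[A /andP[]]|].
    rewrite in_setU1 => /orP[/eqP-> | inA] uvA.
      by move: uvA; rewrite !inE => /andP[/andP[-> ->] /andP[-> ->]]; right.
    by left; apply/existsP; exists A; rewrite inA.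
  case=> [/existsP[A /andP[inA uvA]] | /andP[/andP[us vs] /andP[uS vS]]].
    by exists A; rewrite in_setU1 inA orbT.
  by exists (s.1 :&: S); rewrite setU11 !inE us vs uS vS.
case uS: (u \in S); last by rewrite !andbF orbF.
case us: (u \in s.1); last by rewrite orbF.
have : u \in s.1 :&: S by rewrite inE us uS.
by rewrite noHit inE.
Qed.

Lemma both_remaining_same_cluster s : rounding_inv s -> both_remaining s -> ~~ same_cluster s.
Proof.
rewrite /both_remaining finset.subUset !finset.sub1set => inv /andP[us _].
apply/existsP => -[A /andP[inA /andP[uA _]]].
by move: (fintype.subsetP (partitionS inv inA) u uA); rewrite inE us.
Qed.

Lemma sep_event_terminal s : rounding_inv s -> s.1 = finset.set0 ->
  sep_event u v s = ~~ same_cluster s.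
Proof.
rewrite /rounding_inv /sep_event => inv s0.
rewrite s0 finset.setC0 eqxx in inv *; rewrite andTb.
have triv := partition_trivIset inv.
have covT w : w \in finset.cover s.2 by rewrite (cover_partition inv) inE.
apply/idP/idP.
  case/existsP => A /andP[inA /existsP[B /andP[inB /and3P[AB uA vB]]]].
  apply/existsP => -[D /andP[inD /andP[uD vD]]].
  by rewrite -(def_pblock triv inA uA) -(def_pblock triv inB vB)
    (def_pblock triv inD uD) (def_pblock triv inD vD) eqxx in AB.
move=> nsame; apply/existsP; exists (finset.pblock s.2 u); rewrite pblock_mem //=.
apply/existsP; exists (finset.pblock s.2 v); rewrite pblock_mem //= !mem_pblock !covT !andbT.
apply: contra nsame => /eqP uv; apply/existsP; exists (finset.pblock s.2 u).
by rewrite pblock_mem // mem_pblock covT uv mem_pblock covT.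
Qed.

End RoundingStates.

Section Expectation.
Variables (R : realType) (T : finType) (z : {set T} -> R).
Implicit Types (k : nat) (g : rstate T -> R) (A S : {set T}).

Definition expect k g : R := \sum_(s : rstate T) rdist z k s * g s.

Lemma expect0 g : expect 0 g = g (rinit T).
Proof.
rewrite /expect (bigD1 (rinit T)) //= eqxx mul1r big1 ?addr0 // => s /negbTE ->.
by rewrite mul0r.
Qed.

Lemma expect_step k g :
  expect k.+1 g = expect k (fun s => \sum_S pick_prob z S * g (rstep s S)).
Proof.
rewrite /expect /=; under eq_bigr do rewrite mulr_suml.
rewrite exchange_big /=; apply: eq_bigr => s _.
under eq_bigr do rewrite -mulrA mulr_suml.
rewrite -mulr_sumr (exchange_big_dep xpredT) //=; congr (_ * _).
by apply: eq_bigr => S _; rewrite (big_pred1 (rstep s S)) // => s' /=; rewrite eq_sym.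
Qed.

Lemma rdist_inv k s : rdist z k s != 0 -> rounding_inv s.
Proof.
elim: k s => [|k IHk] s /=.
  by rewrite pnatr_eq0 eqb0 negbK => /eqP ->; exact: rounding_inv_init.
apply: contraTT => ninv; rewrite negbK; apply/eqP/big1 => s0 _.
have [->|/IHk inv0] := eqVneq (rdist z k s0) 0; first by rewrite mul0r.
rewrite big_pred0 ?mulr0 // => S; apply: contraNF ninv => /eqP <-.
exact: rounding_inv_step.
Qed.

Lemma eq_expect_inv k g g' :
  (forall s, rounding_inv s -> g s = g' s) -> expect k g = expect k g'.
Proof.
move=> eq_g; apply: eq_bigr => s _.
by have [->|/rdist_inv/eq_g->] := eqVneq (rdist z k s) 0; rewrite ?mul0r.
Qed.

Lemma expectD k g g' : expect k (fun s => g s + g' s) = expect k g + expect k g'.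
Proof. by rewrite /expect -big_split; apply: eq_bigr => s _; rewrite mulrDr. Qed.

Lemma expectB k g g' : expect k (fun s => g s - g' s) = expect k g - expect k g'.
Proof. by rewrite /expect -sumrB; apply: eq_bigr => s _; rewrite mulrBr. Qed.

Lemma expectMl k a g : expect k (fun s => g s * a) = expect k g * a.
Proof. by rewrite /expect mulr_suml; apply: eq_bigr => s _; rewrite mulrA. Qed.

Lemma expect_sum (I : finType) k (g : I -> rstate T -> R) :
  expect k (fun s => \sum_i g i s) = \sum_i expect k (g i).
Proof. by rewrite /expect; under eq_bigr do rewrite mulr_sumr; exact: exchange_big. Qed.

Lemma prob_by_expect k (E : pred (rstate T)) : prob_by z E k = expect k (fun s => (E s)%:R).
Proof. by rewrite /prob_by /expect sum_mul_indicator. Qed.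

Hypothesis pick_prob_ge0 : forall S, 0 <= pick_prob z S.

Lemma rdist_ge0 k s : 0 <= rdist z k s.
Proof.
elim: k s => [|k IHk] s /=; first by rewrite ler0n.
by apply/sumr_ge0 => s0 _; rewrite mulr_ge0 ?sumr_ge0.
Qed.

Lemma ler_expect k g g' : (forall s, g s <= g' s) -> expect k g <= expect k g'.
Proof. by move=> le_g; apply: ler_sum => s _; rewrite ler_wpM2l ?rdist_ge0. Qed.

Lemma prob_by_ge0 k E : 0 <= prob_by z E k.
Proof. by apply: sumr_ge0 => s _; apply: rdist_ge0. Qed.

Lemma le_prob_by k (E E' : pred (rstate T)) :
  (forall s, E s -> E' s) -> prob_by z E k <= prob_by z E' k.
Proof.
move=> sub; rewrite !prob_by_expect; apply: ler_expect => s.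
by have [/sub->|_] := boolP (E s); rewrite ?ler_nat ?leq_b1.
Qed.

Hypothesis sum_pick_prob : \sum_S pick_prob z S = 1.

Lemma expect1 k : expect k (fun=> 1) = 1.
Proof.
elim: k => [|k IHk]; first by rewrite expect0.
by rewrite expect_step; under eq_fun do under eq_bigr do rewrite mulr1; rewrite sum_pick_prob.
Qed.

Definition hit_prob (A : {set T}) : R :=
  \sum_S pick_prob z S * (~~ [disjoint A & S])%:R.

Lemma hit_prob_le1 A : hit_prob A <= 1.
Proof.
rewrite -sum_pick_prob; apply: ler_sum => S _.
by case: (~~ _); rewrite ?mulr1 ?mulr0 ?pick_prob_ge0.
Qed.

Lemma prob_by_subset_remaining A k :
  prob_by z (fun s => A \subset s.1) k = (1 - hit_prob A) ^+ k.
Proof.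
have step s : \sum_S pick_prob z S * (A \subset (rstep s S).1)%:R
    = (A \subset s.1)%:R * (1 - hit_prob A).
  transitivity (\sum_S (A \subset s.1)%:R *
                   (pick_prob z S - pick_prob z S * (~~ [disjoint A & S])%:R)).
    apply: eq_bigr => S _; rewrite subset_rstep.
    by case: (A \subset s.1); case: [disjoint A & S];
      rewrite /= ?mulr1 ?mulr0 ?mul1r ?mul0r ?subrr ?subr0.
  by rewrite -mulr_sumr sumrB sum_pick_prob.
elim: k => [|k IHk]; first by rewrite prob_by_expect expect0 finset.subsetT.
rewrite !prob_by_expect expect_step in IHk *.
by under eq_fun do rewrite step; rewrite expectMl IHk exprSr.
Qed.

End Expectation.

Section ClusterLP.
Variables (R : realType) (T : finType) (z : {set T} -> R) (x : T -> T -> R).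
Hypothesis feas : cluster_lp_feasible z x.
Implicit Types (A S : {set T}) (u v w : T).

Definition zmass : R := \sum_S zw z S.

Lemma zw_ge0 S : 0 <= zw z S.
Proof. by rewrite /zw; case: eqP => [//|/eqP]; case: feas => _ _; apply. Qed.

Lemma sum_zw_nonempty (P : pred {set T}) :
  (forall S, P S -> S != finset.set0) -> \sum_S zw z S * (P S)%:R = \sum_(S | P S) z S.
Proof.
move=> P_neq0; rewrite sum_mul_indicator; apply: eq_bigr => S /P_neq0.
by rewrite /zw => /negbTE ->.
Qed.

Lemma sum_zw_mem w : \sum_S zw z S * (w \in S)%:R = 1.
Proof.
rewrite (@sum_zw_nonempty (fun S => w \in S)); first by case: feas.
by move=> S wS; apply/finset.set0Pn; exists w.
Qed.

Lemma sum_zw_subset2 u v : u != v ->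
  \sum_S zw z S * ([set u; v] \subset S)%:R = 1 - x u v.
Proof.
move=> uv; under eq_bigr do rewrite finset.subUset !finset.sub1set.
rewrite (@sum_zw_nonempty (fun S => (u \in S) && (v \in S))); first by case: feas => _ ->.
by move=> S /andP[uS _]; apply/finset.set0Pn; exists u.
Qed.

Lemma zmass_gt0 w : 0 < zmass.
Proof.
apply: (@lt_le_trans _ _ 1) => //; rewrite -(sum_zw_mem w); apply: ler_sum => S _.
by case: (w \in S); rewrite ?mulr1 ?mulr0 ?zw_ge0.
Qed.

Lemma pick_prob_ge0 S : 0 <= pick_prob z S.
Proof. by rewrite /pick_prob divr_ge0 ?zw_ge0 ?sumr_ge0 // => S' _; apply: zw_ge0. Qed.

Lemma sum_pick_prob_indicator (P : pred {set T}) :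
  \sum_S pick_prob z S * (P S)%:R = (\sum_S zw z S * (P S)%:R) / zmass.
Proof. by rewrite mulr_suml; apply: eq_bigr => S _; rewrite /pick_prob mulrAC. Qed.

Lemma sum_pick_prob w : \sum_S pick_prob z S = 1.
Proof.
rewrite /pick_prob -mulr_suml -/zmass divff //.
exact: lt0r_neq0 (zmass_gt0 w).
Qed.

Lemma hit_prob_set1 w : hit_prob z [set w] = zmass^-1.
Proof.
rewrite /hit_prob; under eq_bigr do rewrite disjoints1 negbK.
by rewrite sum_pick_prob_indicator sum_zw_mem mul1r.
Qed.

Lemma hit_prob_set2 u v : u != v -> hit_prob z [set u; v] = (1 + x u v) / zmass.
Proof.
move=> uv; rewrite /hit_prob sum_pick_prob_indicator; congr (_ / _).
transitivity (\sum_S (zw z S * (u \in S)%:R + zw z S * (v \in S)%:R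
                      - zw z S * ([set u; v] \subset S)%:R)).
  apply: eq_bigr => S _.
  rewrite finset.disjoints_subset !finset.subUset !finset.sub1set !inE negb_and !negbK.
  by case: (u \in S); case: (v \in S); rewrite /= ?mulr1 ?mulr0 ?subr0 ?addr0 ?add0r ?addrK.
by rewrite sumrB big_split /= !sum_zw_mem sum_zw_subset2 //; lra.
Qed.

Lemma sum_pick_prob_subset2 u v : u != v ->
  \sum_S pick_prob z S * ([set u; v] \subset S)%:R = (1 - x u v) / zmass.
Proof. by move=> uv; rewrite sum_pick_prob_indicator sum_zw_subset2. Qed.

Lemma hit_prob_gt0 A w : w \in A -> 0 < hit_prob z A.
Proof.
move=> wA; apply: (@lt_le_trans _ _ (hit_prob z [set w])).
  by rewrite hit_prob_set1 invr_gt0 (zmass_gt0 w).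
apply: ler_sum => S _; rewrite disjoints1 negbK.
have [wS|_] := boolP (w \in S); last by rewrite mulr0 mulr_ge0 ?pick_prob_ge0.
have -> // : ~~ [disjoint A & S].
by apply/negP => /disjointFr/(_ wA); rewrite wS.
Qed.

End ClusterLP.

Section PairProbabilities.
Variables (R : realType) (T : finType) (z : {set T} -> R) (x : T -> T -> R).
Hypothesis feas : cluster_lp_feasible z x.

Lemma prob_running_le k :
  prob_by z (@running T) k <= #|T|%:R * (1 - (zmass z)^-1) ^+ k.
Proof.
rewrite prob_by_expect.
apply: (@le_trans _ _ (expect z k (fun s => \sum_w ([set w] \subset s.1)%:R))).
  apply: (ler_expect (pick_prob_ge0 feas)) => s.
  rewrite /running; case: finset.set0Pn => [[w ws]|_]; last by rewrite sumr_ge0.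
  by rewrite (bigD1 w) //= finset.sub1set ws lerDl sumr_ge0.
rewrite expect_sum; under eq_bigr => w _.
  rewrite -prob_by_expect (prob_by_subset_remaining (sum_pick_prob feas w)).
  rewrite (hit_prob_set1 feas); over.
by rewrite sumr_const mulr_natl.
Qed.

Variables u v : T.
Hypothesis uv : u != v.

Lemma add1x_gt0 : 0 < 1 + x u v.
Proof.
have := hit_prob_gt0 feas (set21 u v).
by rewrite (hit_prob_set2 feas uv) pmulr_lgt0 // invr_gt0 (zmass_gt0 feas u).
Qed.

Lemma prob_same_cluster k :
  prob_by z (same_cluster u v) k
    = (1 - x u v) / (1 + x u v) * (1 - (1 - hit_prob z [set u; v]) ^+ k).
Proof.
have step s : rounding_inv s ->
    \sum_S pick_prob z S * (same_cluster u v (rstep s S))%:R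
      = (same_cluster u v s)%:R + (both_remaining u v s)%:R * ((1 - x u v) / zmass z).
  move=> inv; transitivity (\sum_S ((same_cluster u v s)%:R * pick_prob z S
      + (both_remaining u v s)%:R * (pick_prob z S * ([set u; v] \subset S)%:R))).
    apply: eq_bigr => S _; rewrite same_cluster_step.
    have [bo|_] := boolP (both_remaining u v s).
      by rewrite (negbTE (both_remaining_same_cluster inv bo)) mul0r add0r mul1r.
    by rewrite /= orbF mul0r addr0 mulrC.
  rewrite big_split /= -!mulr_sumr (sum_pick_prob feas u) mulr1.
  by rewrite (sum_pick_prob_subset2 feas uv).
elim: k => [|k IHk].
  rewrite prob_by_expect expect0 expr0 subrr mulr0.
  by have -> : same_cluster u v (rinit T) = false by apply/existsP => -[A]; rewrite inE.
rewrite !prob_by_expect expect_step in IHk *.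
rewrite (@eq_expect_inv _ _ z k _ (fun s => (same_cluster u v s)%:R
           + (both_remaining u v s)%:R * ((1 - x u v) / zmass z))); last exact: step.
rewrite expectD expectMl IHk -prob_by_expect (prob_by_subset_remaining (sum_pick_prob feas u)).
rewrite (hit_prob_set2 feas uv) exprSr; move: (_ ^+ k) => m.
by field; rewrite lt0r_neq0 ?(zmass_gt0 feas u) ?lt0r_neq0 ?add1x_gt0.
Qed.

Lemma prob_same_event k :
  prob_by z (same_event u v) k
    = prob_by z (same_cluster u v) k - prob_by z (fun s => running s && same_cluster u v s) k.
Proof.
rewrite !prob_by_expect -expectB; apply: eq_expect_inv => s _.
rewrite /same_event /running /same_cluster.
by case: (_ == _); case: [exists _ in _, _]; rewrite ?subrr ?subr0.
Qed.

Lemma prob_sep_event k :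
  prob_by z (sep_event u v) k
    = 1 - prob_by z (@running T) k - prob_by z (same_event u v) k.
Proof.
rewrite !prob_by_expect -[X in X - _ - _](expect1 (sum_pick_prob feas u) k) -!expectB.
apply: eq_expect_inv => s inv; rewrite /running /same_event.
have [s0|s_neq0] := eqVneq s.1 finset.set0; last first.
  by rewrite /sep_event (negbTE s_neq0) subrr subr0.
rewrite (sep_event_terminal u v inv s0) /= subr0 /same_cluster.
by case: [exists _ in _, _]; rewrite ?subr0 ?subrr.
Qed.

End PairProbabilities.

Local Open Scope classical_set_scope.

Section Limits.
Variables (R : realType) (T : finType) (z : {set T} -> R) (x : T -> T -> R).
Hypothesis feas : cluster_lp_feasible z x.

Lemma cvg_miss_prob (A : {set T}) (w : T) :
  w \in A -> (fun k => (1 - hit_prob z A) ^+ k) @ \oo --> 0.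
Proof.
move=> wA; apply: cvg_expr; have h_gt0 := hit_prob_gt0 feas wA.
have h_le1 := hit_prob_le1 (pick_prob_ge0 feas) (sum_pick_prob feas w) A.
by rewrite ger0_norm; lra.
Qed.

(* The vertex [w] only serves to make [zmass z] positive. *)
Lemma prob_running_cvg0 (w : T) : prob_by z (@running T) @ \oo --> 0.
Proof.
apply: (@squeeze_cvgr _ _ _ _ (fun=> 0) (fun k => #|T|%:R * (1 - (zmass z)^-1) ^+ k)).
- by apply: nearW => k; rewrite (prob_by_ge0 (pick_prob_ge0 feas)) (prob_running_le feas).
- exact: cvg_cst.
- rewrite -(mulr0 #|T|%:R); apply: cvgMr.
  by rewrite -(hit_prob_set1 feas w); apply: (cvg_miss_prob (w := w)); rewrite inE.
Qed.

Variables u v : T.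
Hypothesis uv : u != v.

Lemma prob_same_event_cvg :
  prob_by z (same_event u v) @ \oo --> (1 - x u v) / (1 + x u v).
Proof.
have running_cvg0 := prob_running_cvg0 u.
have running_same_cvg0 :
    prob_by z (fun s => running s && same_cluster u v s) @ \oo --> 0.
  apply: squeeze_cvgr (cvg_cst 0) running_cvg0; apply: nearW => k.
  rewrite (prob_by_ge0 (pick_prob_ge0 feas)) (le_prob_by (pick_prob_ge0 feas)) //.
  by move=> s /andP[].
rewrite (funext (prob_same_event z u v)).
have -> : (1 - x u v) / (1 + x u v) = (1 - x u v) / (1 + x u v) * (1 - 0) - 0.
  by rewrite !subr0 mulr1.
apply: cvgB running_same_cvg0; rewrite (funext (prob_same_cluster feas uv)).
apply: cvgMr; apply: cvgB; [exact: cvg_cst | exact: cvg_miss_prob (set21 u v)].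
Qed.

Lemma prob_sep_event_cvg :
  prob_by z (sep_event u v) @ \oo --> 2 * x u v / (1 + x u v).
Proof.
rewrite (funext (prob_sep_event feas u v)).
have -> : 2 * x u v / (1 + x u v) = 1 - 0 - (1 - x u v) / (1 + x u v).
  by field; rewrite lt0r_neq0 ?(add1x_gt0 feas uv).
apply: cvgB; last exact: prob_same_event_cvg.
by apply: cvgB; [exact: cvg_cst | exact: prob_running_cvg0 u].
Qed.

End Limits.

Theorem lemma1 (R : realType) (T : finType) (z : {set T} -> R) (x : T -> T -> R) :
  cluster_lp_feasible z x ->
  forall u v : T, u != v ->
    (prob_by z (sep_event u v) @ \oo --> (2 * x u v / (1 + x u v) : R)) /\
    (prob_by z (same_event u v) @ \oo --> ((1 - x u v) / (1 + x u v) : R)).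
Proof.
move=> feas u v uv.
by split; [exact: prob_sep_event_cvg | exact: prob_same_event_cvg].
Qed.
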